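(* Let $M\in\mathrm{M}_n(\mathbb{K})$ with minimal polynomial $\mu_M=f_1^{m_1}\cdots f_s^{m_s}$, where $f_1,\dots,f_s\in\mathbb{K}[x]$ are pairwise distinct monic irreducible polynomials and $m_i\ge 1$, and let $\mathcal{C}\subseteq\mathbb{L}^n$ be an $M$-code of dimension $k$. Let $\Gamma=\{i\in\{1,\dots,s\} : \ker(f_i^{m_i}(M))\subseteq\mathcal{C}\}$ (kernel in $\mathbb{L}^n$) and $d_\Gamma=\sum_{i\in\Gamma}\dim_{\mathbb{K}}\ker(f_i^{m_i}(M))$. Then $M_r(\mathcal{C})=r$ for all $r\in\{1,\dots,d_\Gamma\}$.
   Context: Let $\mathbb{L}/\mathbb{K}$ be a field extension of finite degree $m$, and $n\ge 1$ an integer with $m\ge n$ (standing assumption). Vectors are row vectors; for a matrix $A$ with entries in $\mathbb{K}$, $\ker(A)$ denotes $\{c : cA^t=0\}$ in $\mathbb{K}^n$ or in $\mathbb{L}^n$. Fix a $\mathbb{K}$-basis $\mathcal{B}$ of $\mathbb{L}$; for $c=(c_1,\dots,c_n)\in\mathbb{L}^n$ let $M_{\mathcal{B}}(c)\in\mathrm{M}_{m\times n}(\mathbb{K})$ be the matrix whose $j$-th column is the coordinate vector of $c_j$ in $\mathcal{B}$. The rank support $\mathrm{Rsupp}(c)\subseteq\mathbb{K}^n$ is the $\mathbb{K}$-row space of $M_{\mathcal{B}}(c)$, and $\mathrm{wt}_R(c)=\dim_{\mathbb{K}}\mathrm{Rsupp}(c)$. For an $\mathbb{L}$-subspace $\mathcal{D}\subseteq\mathbb{L}^n$,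 $\mathrm{Rsupp}(\mathcal{D})$ is the $\mathbb{K}$-span of all $\mathrm{Rsupp}(d)$, $d\in\mathcal{D}$, and $\mathrm{wt}_R(\mathcal{D})=\dim_{\mathbb{K}}\mathrm{Rsupp}(\mathcal{D})$. A linear $[n,k]$ code is a $k$-dimensional $\mathbb{L}$-subspace $\mathcal{C}\subseteq\mathbb{L}^n$; for $1\le r\le k$, $M_r(\mathcal{C})=\min\{\mathrm{wt}_R(\mathcal{D}) : \mathcal{D}\subseteq\mathcal{C},\ \dim_{\mathbb{L}}\mathcal{D}=r\}$. For $M\in\mathrm{M}_n(\mathbb{K})$, a linear code $\mathcal{C}\subseteq\mathbb{L}^n$ is an $M$-code if $cM^t\in\mathcal{C}$ for all $c\in\mathcal{C}$. *)

From HB Require Import structures.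
From mathcomp Require Import all_boot all_order all_algebra all_field.
Set Implicit Arguments. Unset Strict Implicit. Unset Printing Implicit Defensive.
Import GRing.Theory.
Local Open Scope ring_scope.

Definition is_min (P : nat -> Prop) (k : nat) : Prop :=
  P k /\ (forall j, P j -> (k <= j)%N).

Section RankMetric.
Variables (K : fieldType) (L : fieldExtType K) (n : nat).

(* The matrix M_B(c) in M_{m x n}(K), m = [L:K], B = vbasis {:L} (a fixed
   K-basis of L): column j holds the B-coordinates of c_j. *)
Definition MB (c : 'rV[L]_n) : 'M[K]_(\dim {:L}%VS, n) :=
  \matrix_(i < \dim {:L}%VS, j < n) coord (vbasis {:L}%VS) i (c ord0 j).

(* Rsupp(c) is the K-row space of MB c ; wt_R(c) is its dimension. *)
Definition wtR (c : 'rV[L]_n) : nat := \rank (MB c).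

(* wt_R(D) = dim_K of the K-span of all Rsupp(d), d in D, i.e. of the
   smallest K-subspace of K^n (given as a row space) containing every
   Rsupp(d). [is_wtR_sub D w] means wt_R(D) = w. *)
Definition is_wtR_sub (D : {vspace 'rV[L]_n}) (w : nat) : Prop :=
  is_min (fun j => exists V : 'M[K]_n,
            \rank V = j /\ forall d, d \in D -> (MB d <= V)%MS) w.

Definition is_Mr (C : {vspace 'rV[L]_n}) (r v : nat) : Prop :=
  is_min (fun j => exists D : {vspace 'rV[L]_n},
            [/\ (D <= C)%VS, \dim D = r & is_wtR_sub D j]) v.

Definition mxL (A : 'M[K]_n) : 'M[L]_n := map_mx (fun a : K => a%:A) A.

Definition is_M_code (M : 'M[K]_n) (C : {vspace 'rV[L]_n}) : Prop :=
  forall c, c \in C -> c *m (mxL M)^T \in C.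

End RankMetric.

From HB Require Import structures.
From mathcomp Require Import all_boot all_order all_algebra all_field.
Import GRing.Theory.
Local Open Scope ring_scope.
Set Implicit Arguments. Unset Strict Implicit. Unset Printing Implicit Defensive.

(* For a K-matrix V, the L-span of its rows is exactly the set of
   vectors whose rank support lies in the row space of V, and it has
   L-dimension rank V. Hence wt_R(D) >= dim D for every subcode D, while a
   K-subspace W of K^n whose L-span lies in C yields, for every r <= dim W,
   a subcode of dimension and rank weight r. The primary components
   ker f_i^{m_i}(M), i in Gamma, are independent because the f_i are pairwise
   coprime, so their sum is such a W of dimension d_Gamma. *)

Section ScalarExtension.
Variables (K : fieldType) (L : fieldExtType K) (n : nat).

Definition rowspaceL p (V : 'M[K]_(p, n)) : {vspace 'rV[L]_n} :=
  <<[tuple row i (map_mx (in_alg L) V) | i < p]>>%VS.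

Lemma MB_lincomb_rows p (V : 'M[K]_(p, n)) (lam : 'I_p -> L) :
  MB (\sum_k lam k *: row k (map_mx (in_alg L) V)) =
  (\matrix_(i < \dim {:L}%VS, k < p) coord (vbasis {:L}%VS) i (lam k)) *m V.
Proof.
apply/matrixP => i j; rewrite !mxE summxE linear_sum /=.
apply: eq_bigr => k _; rewrite !mxE /= mulrC.
by rewrite mulr_algl linearZ /= mulrC.
Qed.

Lemma MB_inj : injective (@MB K L n).
Proof.
move=> c1 c2 /matrixP eqMB; apply/rowP => j.
rewrite [c1 0 j](coord_vbasis (memvf _)) [c2 0 j](coord_vbasis (memvf _)).
by apply: eq_bigr => i _; have := eqMB i j; rewrite !mxE => ->.
Qed.

Lemma mem_rowspaceL p (V : 'M[K]_(p, n)) d :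
  (d \in rowspaceL V) = (MB d <= V)%MS.
Proof.
have nth_rows (i : 'I_p) :
    [tuple row k (map_mx (in_alg L) V) | k < p]`_i = row i (map_mx (in_alg L) V).
  by rewrite -tnth_nth tnth_mktuple.
apply/idP/idP => [/coord_span -> | /submxP [Y eqMB]].
  under eq_bigr => i _ do rewrite nth_rows.
  by rewrite MB_lincomb_rows submxMl.
pose lam k := \sum_i Y i k *: (vbasis {:L}%VS)`_i.
have -> : d = \sum_k lam k *: row k (map_mx (in_alg L) V).
  apply: MB_inj; rewrite MB_lincomb_rows eqMB; congr (_ *m _).
  apply/matrixP => i k; rewrite mxE coord_sum_free //.
  exact: basis_free (vbasisP _).
apply: memv_suml => k _; apply/memvZ; rewrite -nth_rows.
by apply/memv_span/mem_nth; rewrite size_tuple.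
Qed.

Lemma rowspaceLS p q (V : 'M[K]_(p, n)) (W : 'M[K]_(q, n)) :
  (V <= W)%MS -> (rowspaceL V <= rowspaceL W)%VS.
Proof.
move=> sVW; apply/subvP => d; rewrite !mem_rowspaceL => sdV.
exact: submx_trans sVW.
Qed.

Lemma dim_rowspaceL p (V : 'M[K]_(p, n)) : \dim (rowspaceL V) = \rank V.
Proof.
have -> : rowspaceL V = rowspaceL (row_base V).
  by apply/vspaceP => d; rewrite !mem_rowspaceL eq_row_base.
have /eqnP : free [tuple row k (map_mx (in_alg L) (row_base V)) | k < \rank V].
  apply/freeP => lam lam0 i.
  have lam_rows : (\row_k lam k) *m map_mx (in_alg L) (row_base V) = 0.
    rewrite mulmx_sum_row -[RHS]lam0; apply: eq_bigr => j _.
    by rewrite -tnth_nth tnth_mktuple mxE.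
  have free_rows : row_free (map_mx (in_alg L) (row_base V)).
    by rewrite row_free_map row_base_free.
  have /rowP/(_ i) := row_free_inj free_rows (etrans lam_rows (esym (mul0mx _ _))).
  by rewrite !mxE.
by rewrite size_tuple.
Qed.

Lemma dim_leq_rank_MB_sub (D : {vspace 'rV[L]_n}) p (V : 'M[K]_(p, n)) :
  (forall d, d \in D -> (MB d <= V)%MS) -> (\dim D <= \rank V)%N.
Proof.
move=> sDV; rewrite -dim_rowspaceL; apply: dimvS.
by apply/subvP => d /sDV; rewrite mem_rowspaceL.
Qed.

Lemma is_wtR_sub_geq_dim (D : {vspace 'rV[L]_n}) w :
  is_wtR_sub D w -> (\dim D <= w)%N.
Proof. by case=> [[V [<- /dim_leq_rank_MB_sub]]]. Qed.

Lemma is_wtR_sub_rowspaceL p (V : 'M[K]_(p, n)) :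
  is_wtR_sub (rowspaceL V) (\rank V).
Proof.
split=> [|j [V' [<- /dim_leq_rank_MB_sub]]]; last by rewrite dim_rowspaceL.
exists <<V>>%MS; split; first exact: mxrank_gen.
by move=> d; rewrite mem_rowspaceL genmxE.
Qed.

Lemma rowspaceL_sub (C : {vspace 'rV[L]_n}) p (W : 'M[K]_(p, n)) :
  (forall v : 'rV[K]_n, (v <= W)%MS -> map_mx (in_alg L) v \in C) ->
  (rowspaceL W <= C)%VS.
Proof.
move=> WC; apply/span_subvP => _ /tnthP [k ->].
by rewrite tnth_mktuple -map_row WC ?row_sub.
Qed.

Lemma is_Mr_id (C : {vspace 'rV[L]_n}) p (W : 'M[K]_(p, n)) r :
  (rowspaceL W <= C)%VS -> (r <= \rank W)%N -> is_Mr C r r.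
Proof.
move=> sWC rW; pose V := (pid_mx r : 'M_(r, \rank W)) *m row_base W.
have rankV : \rank V = r by rewrite mxrankMfree ?row_base_free // rank_pid_mx.
have sVW : (V <= W)%MS by rewrite (submx_trans (submxMl _ _)) ?eq_row_base.
split; last by move=> j [D [_ <- /is_wtR_sub_geq_dim]].
exists (rowspaceL V); split; first exact: subv_trans (rowspaceLS sVW) sWC.
  by rewrite dim_rowspaceL.
by rewrite -{2}rankV; apply: is_wtR_sub_rowspaceL.
Qed.

End ScalarExtension.

Lemma horner_mx_tr (K : fieldType) n (M : 'M[K]_n.+1) p :
  (horner_mx M p)^T = horner_mx M^T p.
Proof.
elim/poly_ind: p => [|p c IH]; first by rewrite !rmorph0 trmx0.
rewrite !rmorphD !rmorphM /= !horner_mx_X !horner_mx_C raddfD /= -IH tr_scalar_mx.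
congr (_ + _); rewrite -!mulmxE trmx_mul.
by rewrite -!trmx_mul (comm_mx_horner p (erefl : comm_mx M M)).
Qed.

Lemma coprimep_monic_irreducible (K : fieldType) (p q : {poly K}) :
  p \is monic -> q \is monic -> irreducible_poly p -> irreducible_poly q ->
  p != q -> coprimep p q.
Proof.
move=> mp mq irrp [_ irrq] pq; rewrite irreducible_poly_coprime //.
apply: contra pq => dvd_pq; rewrite -eqp_monic //.
by apply: irrq dvd_pq; case: irrp => /gtn_eqF ->.
Qed.

Theorem corollary3 (K : fieldType) (L : fieldExtType K) (n' : nat)
  (hmn : (n'.+1 <= \dim {:L}%VS)%N)
  (M : 'M[K]_n'.+1) (s : nat) (f : 'I_s -> {poly K}) (mult : 'I_s -> nat)
  (hf_monic : forall i, f i \is monic)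
  (hf_irr : forall i, irreducible_poly (f i))
  (hf_inj : injective f)
  (hmult : forall i, (1 <= mult i)%N)
  (hmin : mxminpoly M = \prod_(i < s) f i ^+ mult i)
  (C : {vspace 'rV[L]_n'.+1}) (k : nat) (hk : \dim C = k)
  (hC : is_M_code M C)
  (Gamma : {set 'I_s})
  (hGamma : forall i, i \in Gamma <->
     (forall c : 'rV[L]_n'.+1,
        c *m (mxL L (horner_mx M (f i ^+ mult i)))^T = 0 -> c \in C)) :
  let dGamma := (\sum_(i in Gamma) \rank (kermx (horner_mx M (f i ^+ mult i))^T))%N in
  forall r : nat, (1 <= r <= dGamma)%N -> is_Mr C r r.
Proof.
move=> dGamma r /andP[_ r_le_d].
pose W := (\sum_(i in Gamma) kermxpoly M^T (f i ^+ mult i))%MS.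
apply: (@is_Mr_id _ _ _ C _ W); last first.
  have /mxdirectP -> : mxdirect W.
    apply: mxdirect_sum_kermx => i j _ _ ji.
    apply/coprimep_expl/coprimep_expr/coprimep_monic_irreducible => //.
    by apply: contra ji => /eqP/hf_inj ->.
  rewrite /= (leq_trans r_le_d) // /dGamma.
  by under eq_bigr => i _ do rewrite horner_mx_tr.
apply: rowspaceL_sub => _ /sub_sumsmxP [u ->]; rewrite raddf_sum.
apply: memv_suml => i iG; apply: (proj1 (hGamma i) iG).
rewrite -[mxL L _]/(map_mx (in_alg L) _) map_trmx -map_mxM horner_mx_tr.
by rewrite -mulmxA mulmx_ker mulmx0 map_mx0.
Qed.
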